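(* Let $(b,0)$ be a tree over $X$. Then $X$ is totally bounded with respect to every metric on $X$ which is intrinsic with respect to some measure $m$ on $X$ with $m(X)<\infty$ if and only if every function of finite energy is bounded, i.e. $\widetilde D\subseteq\ell^\infty(X)$.
   Context: A weighted graph $(b,c)$ over a countably infinite set $X$ consists of a symmetric $b:X\times X\to[0,\infty)$ with $b(x,x)=0$ and $\sum_y b(x,y)<\infty$ for all $x$, and $c:X\to[0,\infty)$; here $c\equiv0$. A path is a finite sequence $(x_0,\dots,x_n)$ of pairwise distinct vertices with $b(x_{i-1},x_i)>0$. The graph is a tree if it is connected (any two distinct vertices are joined by a path) and there is no path $(x_0,\dots,x_n)$ with $n\ge2$ and $b(x_n,x_0)>0$. $\widetilde Q(f)=\frac12\sum_{x,y}b(x,y)|f(x)-f(y)|^2$ and $\widetilde D=\{f:X\to\mathbb C:\widetilde Q(f)<\infty\}$. A measure on $X$ is $m:X\to[0,\infty)$ with $m(A)=\sum_{x\in A}m(x)$; a metric $\sigma$ on $X$ is intrinsic with respect to $m$ if $\frac12\sum_y b(x,y)\sigma(x,y)^2\le m(x)$ for all $x$. *)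

From Stdlib Require Import Reals List.
Import ListNotations.
Open Scope R_scope.

(* Complex numbers represented as pairs (real part, imaginary part). *)
Definition Cpx := (R * R)%type.
Definition Cmod (z : Cpx) : R := sqrt (fst z ^ 2 + snd z ^ 2).
Definition Csub (z w : Cpx) : Cpx := (fst z - fst w, snd z - snd w).

Fixpoint lsum {A : Type} (g : A -> R) (l : list A) : R :=
  match l with [] => 0 | x :: t => g x + lsum g t end.

(* For a nonnegative family g over A:  sum_{a in A} g a <= c, i.e. every
   finite partial sum (over distinct indices) is <= c (sum = sup of finite sums). *)
Definition nnsum_le {A : Type} (g : A -> R) (c : R) : Prop :=
  forall l : list A, NoDup l -> lsum g l <= c.

Definition nn_summable {A : Type} (g : A -> R) : Prop :=
  exists c : R, nnsum_le g c.

Definition countably_infinite (X : Type) : Prop :=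
  exists e : nat -> X,
    (forall n k, e n = e k -> n = k) /\ (forall x, exists n, e n = x).

(* Weighted graph (b, 0) over X (killing term c = 0 plays no role). *)
Definition weighted_graph {X : Type} (b : X -> X -> R) : Prop :=
  (forall x y, 0 <= b x y) /\
  (forall x y, b x y = b y x) /\
  (forall x, b x x = 0) /\
  (forall x, nn_summable (b x)).

Fixpoint chain {X : Type} (b : X -> X -> R) (l : list X) : Prop :=
  match l with
  | x :: ((y :: _) as t) => 0 < b x y /\ chain b t
  | _ => True
  end.

Definition is_path {X : Type} (b : X -> X -> R) (l : list X) : Prop :=
  NoDup l /\ chain b l.

Definition connected {X : Type} (b : X -> X -> R) : Prop :=
  forall x y : X, x <> y -> exists mid : list X, is_path b (x :: mid ++ [y]).

Definition is_tree {X : Type} (b : X -> X -> R) : Prop :=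
  connected b /\
  forall (x0 xn : X) (mid : list X),
    is_path b (x0 :: mid ++ [xn]) -> mid <> [] -> ~ (0 < b xn x0).

Definition is_measure {X : Type} (m : X -> R) : Prop := forall x, 0 <= m x.

Definition is_metric {X : Type} (s : X -> X -> R) : Prop :=
  (forall x y, 0 <= s x y) /\
  (forall x y, s x y = 0 <-> x = y) /\
  (forall x y, s x y = s y x) /\
  (forall x y z, s x z <= s x y + s y z).

Definition intrinsic {X : Type} (b : X -> X -> R) (m : X -> R) (s : X -> X -> R) : Prop :=
  forall x, nnsum_le (fun y => / 2 * (b x y * s x y ^ 2)) (m x).

Definition totally_bounded {X : Type} (s : X -> X -> R) : Prop :=
  forall eps : R, 0 < eps ->
    exists F : list X, forall x : X, exists y : X, In y F /\ s x y < eps.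

Definition finite_energy {X : Type} (b : X -> X -> R) (f : X -> Cpx) : Prop :=
  nn_summable (fun p : X * X =>
    / 2 * (b (fst p) (snd p) * Cmod (Csub (f (fst p)) (f (snd p))) ^ 2)).

Definition bounded_fun {X : Type} (f : X -> Cpx) : Prop :=
  exists M : R, forall x, Cmod (f x) <= M.

(* (=>) For a real function g of finite energy, the metric
   min(|g x - g y|, 1) + vertex_dist w x y (where vertex_dist separates
   distinct vertices by small summable weights) has finite energy, so it is
   intrinsic for the finite measure of its row energies.  A finite 1/2-net
   for it bounds g; complex functions are handled coordinatewise.
   (<=) Given a finite measure m and an intrinsic metric s, choose q -> oo
   with sum q m < oo and stretch every edge xy to s(x,y) max(sqrt q x,
   sqrt q y).  The stretched walk distance from a root is Lipschitz along
   edges, hence of finite energy (its energy is at most 2 sum q m), hence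
   bounded.  Since the stretching is large outside a finite set F, every
   vertex is s-close to the last vertex of F on a short walk to it. *)

From Stdlib Require Import Reals List Lra Lia Psatz ClassicalEpsilon FinFun.
Import ListNotations.
Open Scope R_scope.

Lemma lsum_app {A} (g : A -> R) l1 l2 : lsum g (l1 ++ l2) = lsum g l1 + lsum g l2.
Proof. induction l1 as [|a l IH]; simpl; [lra|]. rewrite IH; lra. Qed.

Lemma lsum_nonneg {A} (g : A -> R) l : (forall a, 0 <= g a) -> 0 <= lsum g l.
Proof. intros Hg; induction l as [|a l IH]; simpl; [lra|]. specialize (Hg a); lra. Qed.

Lemma lsum_le {A} (g h : A -> R) l : (forall a, g a <= h a) -> lsum g l <= lsum h l.
Proof. intros H; induction l as [|a l IH]; simpl; [lra|]. specialize (H a); lra. Qed.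

Lemma lsum_plus {A} (g h : A -> R) l : lsum (fun a => g a + h a) l = lsum g l + lsum h l.
Proof. induction l as [|a l IH]; simpl; [lra|]. rewrite IH; lra. Qed.

Lemma lsum_scal {A} (g : A -> R) k l : lsum (fun a => k * g a) l = k * lsum g l.
Proof. induction l as [|a l IH]; simpl; [lra|]. rewrite IH; lra. Qed.

Lemma lsum_map {A B} (g : B -> R) (h : A -> B) l : lsum g (map h l) = lsum (fun a => g (h a)) l.
Proof. induction l as [|a l IH]; simpl; [lra|]. rewrite IH; lra. Qed.

Lemma lsum_ext {A} (g h : A -> R) l : (forall a, In a l -> g a = h a) -> lsum g l = lsum h l.
Proof.
  induction l as [|a l IH]; intros H; simpl; [lra|].
  rewrite H by (left; reflexivity). rewrite IH; [reflexivity|].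
  intros b Hb; apply H; right; exact Hb.
Qed.

Lemma lsum_filter_split {A} (g : A -> R) (P : A -> bool) l :
  lsum g l = lsum g (filter P l) + lsum g (filter (fun a => negb (P a)) l).
Proof. induction l as [|a l IH]; simpl; [lra|]. destruct (P a); simpl; lra. Qed.

Lemma lsum_incl {A} (g : A -> R) l1 l2 :
  (forall a, 0 <= g a) -> NoDup l1 -> incl l1 l2 -> lsum g l1 <= lsum g l2.
Proof.
  intros Hg Hnd; revert l2; induction Hnd as [|a l1 Ha Hnd IH]; intros l2 Hi; simpl.
  - apply lsum_nonneg; auto.
  - destruct (in_split a l2) as [B1 [B2 ->]]; [apply Hi; left; auto|].
    assert (Hrest : lsum g l1 <= lsum g (B1 ++ B2)).
    { apply IH. intros x Hx. destruct (in_app_or B1 (a :: B2) x) as [H|[H|H]];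
        [apply Hi; right; auto|apply in_or_app; auto|congruence|apply in_or_app; auto]. }
    rewrite lsum_app in *. simpl. lra.
Qed.

Lemma lsum_In_le {A} (g : A -> R) l a : (forall b, 0 <= g b) -> In a l -> g a <= lsum g l.
Proof.
  intros Hg; induction l as [|c l IH]; simpl; [tauto|]. intros [->|H].
  - pose proof (lsum_nonneg g l Hg); lra.
  - specialize (IH H). specialize (Hg c); lra.
Qed.

Lemma nnsum_le_bound_nonneg {A} (g : A -> R) C : nnsum_le g C -> 0 <= C.
Proof. intros H. exact (H [] (NoDup_nil _)). Qed.

Lemma nnsum_le_mono {A} (g h : A -> R) C :
  (forall a, g a <= h a) -> nnsum_le h C -> nnsum_le g C.
Proof. intros Hgh Hh l Hl. eapply Rle_trans; [apply lsum_le, Hgh|apply Hh, Hl]. Qed.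

Lemma nnsum_le_plus {A} (g h : A -> R) C D :
  nnsum_le g C -> nnsum_le h D -> nnsum_le (fun a => g a + h a) (C + D).
Proof. intros Hg Hh l Hl. rewrite lsum_plus. specialize (Hg l Hl); specialize (Hh l Hl); lra. Qed.

Lemma nnsum_le_scal {A} (g : A -> R) k C :
  0 <= k -> nnsum_le g C -> nnsum_le (fun a => k * g a) (k * C).
Proof. intros Hk Hg l Hl. rewrite lsum_scal. apply Rmult_le_compat_l; auto. Qed.

Lemma nnsum_le_swap {X} (g : X * X -> R) C :
  nnsum_le g C -> nnsum_le (fun p => g (snd p, fst p)) C.
Proof.
  intros Hg l Hl. rewrite <- (lsum_map g (fun p => (snd p, fst p))). apply Hg.
  apply Injective_map_NoDup; auto. intros [a b] [c d] E; inversion E; auto.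
Qed.

Lemma nnsum_le_row {X} (g : X * X -> R) C x :
  nnsum_le g C -> nnsum_le (fun y => g (x, y)) C.
Proof.
  intros Hg l Hl. rewrite <- (lsum_map g (fun y => (x, y))). apply Hg.
  apply Injective_map_NoDup; auto. intros u v E; inversion E; auto.
Qed.

Lemma nnsum_le_reindex {X} (idx : X -> nat) (h : nat -> R) A :
  (forall x y, idx x = idx y -> x = y) -> (forall k, 0 <= h k) ->
  (forall N, lsum h (seq 0 N) <= A) -> nnsum_le (fun x => h (idx x)) A.
Proof.
  intros Hinj Hh HA K HK. rewrite <- (lsum_map h idx).
  eapply Rle_trans; [|apply (HA (S (list_max (map idx K))))].
  apply lsum_incl; auto.
  - apply Injective_map_NoDup; auto.
  - intros k Hk. apply in_seq. split; [lia|].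
    pose proof (proj1 (list_max_le (map idx K) _) (le_n _)) as Hmax.
    rewrite Forall_forall in Hmax. specialize (Hmax k Hk). lia.
Qed.

Definition is_sum {A} (g : A -> R) (c : R) : Prop :=
  nnsum_le g c /\ forall c', nnsum_le g c' -> c <= c'.

Lemma is_sum_exists {A} (g : A -> R) : nn_summable g -> exists c, is_sum g c.
Proof.
  intros [C HC].
  destruct (completeness (fun r => exists l, NoDup l /\ r = lsum g l)) as [c [Hub Hlub]].
  - exists C. intros r [l [Hl ->]]. apply HC, Hl.
  - exists 0, []. split; [constructor|reflexivity].
  - exists c. split.
    + intros l Hl. apply Hub. eauto.
    + intros c' Hc'. apply Hlub. intros r [l [Hl ->]]. apply Hc', Hl.
Qed.

Definition classic_eq_dec {X} (x y : X) : {x = y} + {x <> y} :=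
  excluded_middle_informative (x = y).

Lemma pairs_le_rows {X} (g : X * X -> R) (M : X -> R) :
  (forall x, nnsum_le (fun y => g (x, y)) (M x)) ->
  forall K P, NoDup P -> (forall p, In p P -> In (fst p) K) -> lsum g P <= lsum M K.
Proof.
  intros Hrow K; induction K as [|x K IH]; intros P HP HK; simpl.
  - destruct P as [|p P]; [simpl; lra|]. destruct (HK p (or_introl eq_refl)).
  - set (onrow := fun p : X * X => if classic_eq_dec (fst p) x then true else false).
    assert (Honrow : forall p, onrow p = true <-> fst p = x).
    { intros p; unfold onrow; destruct classic_eq_dec; split; congruence. }
    rewrite (lsum_filter_split g onrow P).
    assert (Hx : lsum g (filter onrow P) <= M x).
    { assert (Hfst : forall p, In p (filter onrow P) -> fst p = x).
      { intros p Hp. apply Honrow, (proj2 (proj1 (filter_In _ _ _) Hp)). }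
      replace (lsum g (filter onrow P)) with (lsum (fun y => g (x, y)) (map snd (filter onrow P))).
      - apply Hrow. apply NoDup_map_NoDup_ForallPairs; [|apply NoDup_filter, HP].
        intros [a c] [a' c'] Hp Hp' E. simpl in E; subst.
        apply Hfst in Hp, Hp'. simpl in Hp, Hp'. subst. reflexivity.
      - rewrite lsum_map. apply lsum_ext. intros [a c] Hp. rewrite <- (Hfst _ Hp). reflexivity. }
    assert (Hrest : lsum g (filter (fun p => negb (onrow p)) P) <= lsum M K).
    { apply IH; [apply NoDup_filter, HP|]. intros p Hp.
      apply filter_In in Hp as [Hp Hneg].
      destruct (HK p Hp) as [E|]; auto.
      apply eq_sym, Honrow in E. rewrite E in Hneg. discriminate. }
    lra.
Qed.

Lemma nnsum_le_of_rows {X} (g : X * X -> R) (M : X -> R) C :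
  (forall x, nnsum_le (fun y => g (x, y)) (M x)) -> nnsum_le M C -> nnsum_le g C.
Proof.
  intros Hrow HM P HP.
  eapply Rle_trans; [apply (pairs_le_rows g M Hrow (nodup classic_eq_dec (map fst P)))|].
  - exact HP.
  - intros p Hp. apply nodup_In, in_map, Hp.
  - apply HM, NoDup_nodup.
Qed.

Lemma rows_le_pairs {X} (g : X * X -> R) (m : X -> R) C :
  (forall x, is_sum (fun y => g (x, y)) (m x)) -> nnsum_le g C -> nnsum_le m C.
Proof.
  intros Hm Hg.
  assert (Hgen : forall K, NoDup K -> forall P, NoDup P ->
            (forall p, In p P -> ~ In (fst p) K) -> lsum g P + lsum m K <= C).
  { intros K HK; induction HK as [|a K Ha HK IH]; intros P HP HPK; simpl.
    - specialize (Hg P HP). lra.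
    - assert (Hrow : nnsum_le (fun y => g (a, y)) (C - lsum g P - lsum m K)).
      { intros l Hl.
        assert (Hext : lsum g (P ++ map (fun y => (a, y)) l) + lsum m K <= C).
        { apply IH.
          - apply NoDup_app; auto.
            + apply Injective_map_NoDup; auto. intros u v E; inversion E; auto.
            + intros p Hp Hp'. apply in_map_iff in Hp' as [y [<- _]].
              apply (HPK _ Hp). left; reflexivity.
          - intros p Hp. apply in_app_or in Hp as [Hp|Hp].
            + intros Hin. apply (HPK _ Hp). right; exact Hin.
            + apply in_map_iff in Hp as [y [<- _]]. exact Ha. }
        rewrite lsum_app, lsum_map in Hext. lra. }
      pose proof (proj2 (Hm a) _ Hrow). lra. }
  intros K HK. specialize (Hgen K HK [] (NoDup_nil _) ltac:(simpl; tauto)). simpl in Hgen. lra.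
Qed.

(* Finite energy of [f] is summability of
   [pair_energy b (fun x y => Cmod (Csub (f x) (f y)))], and [s] is intrinsic
   for [m] when the row sums of [pair_energy b s] are bounded by [m]. *)
Definition pair_energy {X} (b d : X -> X -> R) (p : X * X) : R :=
  / 2 * (b (fst p) (snd p) * d (fst p) (snd p) ^ 2).

Lemma pair_energy_le {X} (b d1 d2 : X -> X -> R) p :
  (forall x y, 0 <= b x y) ->
  d1 (fst p) (snd p) ^ 2 <= d2 (fst p) (snd p) ^ 2 -> pair_energy b d1 p <= pair_energy b d2 p.
Proof.
  intros Hb H. unfold pair_energy. pose proof (Hb (fst p) (snd p)).
  apply Rmult_le_compat_l; [lra|]. apply Rmult_le_compat_l; auto.
Qed.

(* The energy of a sum of two distances is at most twice the sum of their
   energies, since (u + v)^2 <= 2 u^2 + 2 v^2. *)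
Lemma energy_plus {X} (b d1 d2 : X -> X -> R) C1 C2 :
  (forall x y, 0 <= b x y) ->
  nnsum_le (pair_energy b d1) C1 -> nnsum_le (pair_energy b d2) C2 ->
  nnsum_le (pair_energy b (fun x y => d1 x y + d2 x y)) (2 * C1 + 2 * C2).
Proof.
  intros Hb H1 H2.
  apply (nnsum_le_mono _ (fun p => 2 * pair_energy b d1 p + 2 * pair_energy b d2 p)).
  - intros [x y]. unfold pair_energy; simpl. pose proof (Hb x y).
    pose proof (pow2_ge_0 (d1 x y - d2 x y)). nra.
  - apply nnsum_le_plus; apply nnsum_le_scal; auto; lra.
Qed.

(* A distance of finite energy is intrinsic with respect to the finite
   measure formed by its row energies. *)
Lemma intrinsic_measure_exists {X} (b s : X -> X -> R) :
  (forall x y, 0 <= b x y) -> nn_summable (pair_energy b s) ->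
  exists m, is_measure m /\ nn_summable m /\ intrinsic b m s.
Proof.
  intros Hb [C HC].
  assert (Hrows : forall x, exists c, is_sum (fun y => pair_energy b s (x, y)) c).
  { intros x. apply is_sum_exists. exists C. apply nnsum_le_row, HC. }
  destruct (choice _ Hrows) as [m Hm].
  exists m. split; [|split].
  - intros x. exact (nnsum_le_bound_nonneg _ _ (proj1 (Hm x))).
  - exists C. exact (rows_le_pairs _ m C Hm HC).
  - intros x. exact (proj1 (Hm x)).
Qed.

Definition is_pseudometric {X} (d : X -> X -> R) : Prop :=
  (forall x y, 0 <= d x y) /\ (forall x, d x x = 0) /\
  (forall x y, d x y = d y x) /\ (forall x y z, d x z <= d x y + d y z).

Lemma metric_plus_pseudometric {X} (d s : X -> X -> R) :
  is_pseudometric d -> is_metric s -> is_metric (fun x y => d x y + s x y).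
Proof.
  intros [Hd0 [Hdd [Hds Hdt]]] [Hs0 [Hseq [Hss Hst]]].
  split; [|split; [|split]].
  - intros x y. specialize (Hd0 x y); specialize (Hs0 x y). lra.
  - intros x y; split.
    + intros E. apply Hseq. specialize (Hd0 x y); specialize (Hs0 x y). lra.
    + intros ->. rewrite Hdd, (proj2 (Hseq y y) eq_refl). lra.
  - intros x y. rewrite Hds, Hss. reflexivity.
  - intros x y z. specialize (Hdt x y z); specialize (Hst x y z). lra.
Qed.

Definition truncated_dist {X} (g : X -> R) (x y : X) : R := Rmin (Rabs (g x - g y)) 1.

Lemma truncated_dist_pseudometric {X} (g : X -> R) : is_pseudometric (truncated_dist g).
Proof.
  unfold truncated_dist. split; [|split; [|split]].
  - intros x y. apply Rmin_glb; [apply Rabs_pos|lra].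
  - intros x. replace (g x - g x) with 0 by ring. rewrite Rabs_R0. apply Rmin_left; lra.
  - intros x y. rewrite Rabs_minus_sym. reflexivity.
  - intros x y z. pose proof (Rabs_triang (g x - g y) (g y - g z)).
    replace (g x - g y + (g y - g z)) with (g x - g z) in H by ring.
    pose proof (Rabs_pos (g x - g y)); pose proof (Rabs_pos (g y - g z)).
    unfold Rmin; repeat destruct Rle_dec; lra.
Qed.

Lemma truncated_dist_sq_le {X} (g : X -> R) x y :
  truncated_dist g x y ^ 2 <= (g x - g y) ^ 2.
Proof.
  unfold truncated_dist. rewrite <- (pow2_abs (g x - g y)).
  pose proof (Rmin_l (Rabs (g x - g y)) 1). pose proof (Rabs_pos (g x - g y)).
  assert (0 <= Rmin (Rabs (g x - g y)) 1) by (apply Rmin_glb; lra). nra.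
Qed.

Lemma truncated_dist_small {X} (g : X -> R) x y :
  truncated_dist g x y < / 2 -> Rabs (g x - g y) < / 2.
Proof. unfold truncated_dist, Rmin. destruct Rle_dec; lra. Qed.

Definition vertex_dist {X} (w : X -> R) (x y : X) : R :=
  if classic_eq_dec x y then 0 else Rmax (w x) (w y).

Lemma vertex_dist_metric {X} (w : X -> R) : (forall x, 0 < w x) -> is_metric (vertex_dist w).
Proof.
  intros Hw. unfold vertex_dist.
  assert (Hmax : forall x y, 0 < Rmax (w x) (w y)).
  { intros x y. pose proof (Rmax_l (w x) (w y)). pose proof (Hw x). lra. }
  split; [|split; [|split]].
  - intros x y. destruct classic_eq_dec; [lra|]. apply Rlt_le, Hmax.
  - intros x y. destruct classic_eq_dec as [E|E]; [tauto|].
    split; [pose proof (Hmax x y); lra|tauto].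
  - intros x y. destruct (classic_eq_dec x y), (classic_eq_dec y x); subst;
      try reflexivity; try congruence. apply Rmax_comm.
  - intros x y z. pose proof (Rmax_l (w x) (w y)). pose proof (Rmax_r (w x) (w y)).
    pose proof (Rmax_l (w y) (w z)). pose proof (Rmax_r (w y) (w z)).
    pose proof (Hmax x y). pose proof (Hmax y z). pose proof (Hmax x z).
    destruct (classic_eq_dec x z) as [->|Hxz]; [destruct classic_eq_dec, classic_eq_dec; lra|].
    destruct (classic_eq_dec x y) as [->|]; [destruct classic_eq_dec; [congruence|lra]|].
    destruct (classic_eq_dec y z) as [->|]; [lra|].
    unfold Rmax at 1; destruct Rle_dec; lra.
Qed.

Lemma vertex_dist_sq_le {X} (w : X -> R) x y : vertex_dist w x y ^ 2 <= w x ^ 2 + w y ^ 2.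
Proof.
  unfold vertex_dist. destruct classic_eq_dec.
  - pose proof (pow2_ge_0 (w x)); pose proof (pow2_ge_0 (w y)). lra.
  - unfold Rmax. destruct Rle_dec; pose proof (pow2_ge_0 (w x)); pose proof (pow2_ge_0 (w y)); lra.
Qed.

Lemma geometric_partial_sums a N : lsum (fun k => (/ 2) ^ k) (seq a N) <= 2 * (/ 2) ^ a.
Proof.
  revert a; induction N as [|N IH]; intros a; simpl.
  - pose proof (pow_le (/ 2) a). lra.
  - specialize (IH (S a)). simpl in IH. lra.
Qed.

(* On a countable graph there are positive vertex weights [w] for which
   [vertex_dist w] has finite energy: take [w x^2] of order [2^-n / deg x]
   at the [n]-th vertex. *)
Lemma vertex_dist_finite_energy {X} (b : X -> X -> R) (idx : X -> nat) :
  weighted_graph b -> (forall x y, idx x = idx y -> x = y) ->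
  exists w : X -> R, (forall x, 0 < w x) /\ nn_summable (pair_energy b (vertex_dist w)).
Proof.
  intros [Hb0 [Hbs [_ Hdeg]]] Hinj.
  destruct (choice _ Hdeg) as [B HB].
  assert (HB0 : forall x, 0 <= B x) by (intros x; exact (nnsum_le_bound_nonneg _ _ (HB x))).
  set (p := fun x => (/ 2) ^ idx x).
  assert (Hp : forall x, 0 < p x) by (intros x; apply pow_lt; lra).
  set (w := fun x => sqrt (p x / (1 + B x))).
  assert (Hw2 : forall x, w x ^ 2 = p x / (1 + B x)).
  { intros x. apply pow2_sqrt. apply Rlt_le, Rdiv_lt_0_compat; [apply Hp|specialize (HB0 x); lra]. }
  assert (HwB : forall x, w x ^ 2 * B x <= p x).
  { intros x. rewrite Hw2. specialize (HB0 x). specialize (Hp x).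
    apply (Rmult_le_reg_r (1 + B x)); [lra|].
    replace (p x / (1 + B x) * B x * (1 + B x)) with (p x * B x) by (field; lra). nra. }
  assert (Hedge : nnsum_le (fun e => b (fst e) (snd e) * w (fst e) ^ 2) 2).
  { apply (nnsum_le_of_rows _ p).
    - intros x l Hl. eapply Rle_trans; [|apply (HwB x)]. cbn [fst snd].
      rewrite (lsum_ext _ (fun y => w x ^ 2 * b x y)) by (intros; ring).
      rewrite lsum_scal. apply Rmult_le_compat_l; [apply pow2_ge_0|apply HB, Hl].
    - apply (nnsum_le_reindex idx (fun k => (/ 2) ^ k)); auto.
      + intros k; apply pow_le; lra.
      + intros N. pose proof (geometric_partial_sums 0 N) as H. simpl in H. lra. }
  exists w. split.
  - intros x. apply sqrt_lt_R0, Rdiv_lt_0_compat; [apply Hp|specialize (HB0 x); lra].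
  - exists (/ 2 * 2 + / 2 * 2).
    apply (nnsum_le_mono _ (fun e => / 2 * (b (fst e) (snd e) * w (fst e) ^ 2)
                            + / 2 * (b (snd e) (fst e) * w (snd e) ^ 2))).
    + intros [x y]. unfold pair_energy; simpl. rewrite (Hbs y x).
      pose proof (vertex_dist_sq_le w x y). pose proof (Hb0 x y).
      assert (b x y * vertex_dist w x y ^ 2 <= b x y * (w x ^ 2 + w y ^ 2))
        by (apply Rmult_le_compat_l; auto). lra.
    + apply nnsum_le_plus; apply nnsum_le_scal; try lra; auto.
      exact (nnsum_le_swap _ _ Hedge).
Qed.

(* A real function of finite energy is bounded: perturbing the truncated
   distance it induces by a [vertex_dist] gives a metric of finite energy,
   intrinsic for a finite measure, and a finite [1/2]-net for this metric
   bounds the function. *)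
Lemma bounded_of_finite_energy_real {X} (b : X -> X -> R) (idx : X -> nat) :
  weighted_graph b -> (forall x y, idx x = idx y -> x = y) ->
  (forall (m : X -> R) (s : X -> X -> R),
      is_measure m -> nn_summable m -> is_metric s -> intrinsic b m s -> totally_bounded s) ->
  forall g : X -> R, nn_summable (pair_energy b (fun x y => g x - g y)) ->
  exists M, forall x, Rabs (g x) <= M.
Proof.
  intros Hb Hinj HTB g [c Hc].
  assert (Hb0 : forall x y, 0 <= b x y) by apply Hb.
  destruct (vertex_dist_finite_energy b idx Hb Hinj) as [w [Hw [Cw HCw]]].
  set (s := fun x y => truncated_dist g x y + vertex_dist w x y).
  assert (Hs : is_metric s).
  { exact (metric_plus_pseudometric _ _ (truncated_dist_pseudometric g) (vertex_dist_metric w Hw)). }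
  assert (Henergy : nn_summable (pair_energy b s)).
  { exists (2 * c + 2 * Cw). apply energy_plus; auto.
    apply (nnsum_le_mono _ (pair_energy b (fun x y => g x - g y))); auto.
    intros p. apply pair_energy_le; auto. apply truncated_dist_sq_le. }
  destruct (intrinsic_measure_exists b s Hb0 Henergy) as [m [Hm [Hms Hint]]].
  destruct (HTB m s Hm Hms Hs Hint (/ 2)) as [F HF]; [lra|].
  exists (lsum (fun y => Rabs (g y)) F + / 2). intros x.
  destruct (HF x) as [y [Hy Hxy]].
  assert (Hgy : Rabs (g y) <= lsum (fun y => Rabs (g y)) F).
  { apply (lsum_In_le (fun y => Rabs (g y))); auto. intros; apply Rabs_pos. }
  assert (Hgxy : Rabs (g x - g y) < / 2).
  { apply truncated_dist_small. pose proof (proj1 (vertex_dist_metric w Hw) x y).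
    unfold s in Hxy. lra. }
  pose proof (Rabs_triang (g x - g y) (g y)) as Htri.
  replace (g x - g y + g y) with (g x) in Htri by ring. lra.
Qed.

Lemma Cmod_sq (z : Cpx) : Cmod z ^ 2 = fst z ^ 2 + snd z ^ 2.
Proof.
  unfold Cmod. rewrite pow2_sqrt; auto.
  pose proof (pow2_ge_0 (fst z)); pose proof (pow2_ge_0 (snd z)); lra.
Qed.

Lemma Cmod_le_abs (z : Cpx) : Cmod z <= Rabs (fst z) + Rabs (snd z).
Proof.
  pose proof (Rabs_pos (fst z)); pose proof (Rabs_pos (snd z)).
  unfold Cmod. rewrite <- (sqrt_pow2 (Rabs (fst z) + Rabs (snd z))) by lra.
  apply sqrt_le_1; [pose proof (pow2_ge_0 (fst z)); pose proof (pow2_ge_0 (snd z)); lra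
                   |apply pow2_ge_0|].
  rewrite <- (pow2_abs (fst z)), <- (pow2_abs (snd z)). nra.
Qed.

Lemma Cmod_real (r : R) : Cmod (r, 0) = Rabs r.
Proof. unfold Cmod; simpl. rewrite <- sqrt_Rsqr_abs. f_equal. unfold Rsqr. ring. Qed.

(* Both coordinates of a complex function of finite energy have finite
   energy, and a complex function with bounded coordinates is bounded. *)
Lemma bounded_of_finite_energy {X} (b : X -> X -> R) (f : X -> Cpx) :
  (forall x y, 0 <= b x y) ->
  (forall g : X -> R, nn_summable (pair_energy b (fun x y => g x - g y)) ->
     exists M, forall x, Rabs (g x) <= M) ->
  finite_energy b f -> bounded_fun f.
Proof.
  intros Hb0 Hreal [c Hc].
  assert (Hcoord : forall g : X -> R,
             (forall x y, (g x - g y) ^ 2 <= Cmod (Csub (f x) (f y)) ^ 2) ->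
             exists M, forall x, Rabs (g x) <= M).
  { intros g Hg. apply Hreal. exists c.
    apply (nnsum_le_mono _ (pair_energy b (fun x y => Cmod (Csub (f x) (f y))))); [|exact Hc].
    intros p. apply pair_energy_le; auto. }
  destruct (Hcoord (fun x => fst (f x))) as [M1 H1].
  { intros x y. rewrite Cmod_sq. simpl. pose proof (pow2_ge_0 (snd (f x) - snd (f y))). lra. }
  destruct (Hcoord (fun x => snd (f x))) as [M2 H2].
  { intros x y. rewrite Cmod_sq. simpl. pose proof (pow2_ge_0 (fst (f x) - fst (f y))). lra. }
  exists (M1 + M2). intros x. pose proof (Cmod_le_abs (f x)). specialize (H1 x); specialize (H2 x). lra.
Qed.

(** Divergent multipliers for convergent series. *)

(* A convergent series of nonnegative terms is dominated termwise by the
   differences of a positive sequence tending to zero (its tails, slightly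
   enlarged to stay positive). *)
Lemma tail_majorant (mu : nat -> R) A :
  (forall k, 0 <= mu k) -> (forall N, lsum mu (seq 0 N) <= A) ->
  exists rho : nat -> R, (forall k, 0 < rho k) /\ (forall k, mu k <= rho k - rho (S k)) /\
    (forall eps, 0 < eps -> exists K, forall k, (K <= k)%nat -> rho k < eps).
Proof.
  intros Hmu HA.
  set (partial := fun N => lsum mu (seq 0 N)).
  assert (Hstep : forall N, partial (S N) = partial N + mu N).
  { intros N. unfold partial. rewrite seq_S, lsum_app. simpl. lra. }
  assert (Hmono : forall N k, (N <= k)%nat -> partial N <= partial k).
  { intros N k Hk. induction Hk as [|k Hk IH]; [lra|]. rewrite Hstep. specialize (Hmu k). lra. }
  destruct (completeness (fun r => exists N, r = partial N)) as [L [Hub Hlub]].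
  { exists A. intros r [N ->]. apply HA. }
  { exists (partial 0%nat). eauto. }
  assert (HL : forall N, partial N <= L) by (intros N; apply Hub; eauto).
  assert (Htail : forall eps, 0 < eps -> exists N, forall k, (N <= k)%nat -> L - partial k < eps).
  { intros eps Heps. apply NNPP. intros Hno.
    assert (L <= L - eps); [|lra].
    apply Hlub. intros r [N ->]. apply Rnot_lt_le. intros Hlt. apply Hno. exists N.
    intros k Hk. specialize (Hmono N k Hk). lra. }
  exists (fun k => L - partial k + (/ 2) ^ k). split; [|split].
  - intros k. specialize (HL k). pose proof (pow_lt (/ 2) k ltac:(lra)). lra.
  - intros k. rewrite Hstep. simpl. pose proof (pow_lt (/ 2) k ltac:(lra)). lra.
  - intros eps Heps.
    destruct (Htail (eps / 2)) as [N1 HN1]; [lra|].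
    destruct (pow_lt_1_zero (/ 2) ltac:(rewrite Rabs_pos_eq; lra) (eps / 2) ltac:(lra)) as [N2 HN2].
    exists (max N1 N2). intros k Hk.
    specialize (HN1 k ltac:(lia)). specialize (HN2 k ltac:(lia)).
    rewrite Rabs_pos_eq in HN2 by (apply pow_le; lra). lra.
Qed.

(* The elementary inequality behind [sum mu_k / sqrt(rho_k) < oo]:
   u <= a^2 - c^2 implies u / a <= 2 (a - c). *)
Lemma sqrt_telescoping_step (a c u : R) :
  0 < a -> 0 < c -> 0 <= u -> u <= a ^ 2 - c ^ 2 -> / a * u <= 2 * (a - c).
Proof.
  intros Ha Hc Hu Hle.
  assert (Hca : c <= a) by nra.
  apply (Rmult_le_reg_l a); [lra|].
  rewrite <- Rmult_assoc, Rinv_r, Rmult_1_l by lra. nra.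
Qed.

Lemma divergent_multiplier (mu : nat -> R) A :
  (forall k, 0 <= mu k) -> (forall N, lsum mu (seq 0 N) <= A) ->
  exists q : nat -> R, (forall k, 0 <= q k) /\
    (forall J, exists K, forall k, (K <= k)%nat -> J <= q k) /\
    (exists C, forall N, lsum (fun k => q k * mu k) (seq 0 N) <= C).
Proof.
  intros Hmu HA.
  destruct (tail_majorant mu A Hmu HA) as [rho [Hrho [Hdiff Hlim]]].
  set (a := fun k => sqrt (rho k)).
  assert (Ha : forall k, 0 < a k) by (intros k; apply sqrt_lt_R0, Hrho).
  assert (Ha2 : forall k, a k ^ 2 = rho k) by (intros k; apply pow2_sqrt, Rlt_le, Hrho).
  exists (fun k => / a k). split; [|split].
  - intros k. apply Rlt_le, Rinv_0_lt_compat, Ha.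
  - intros J. set (J' := Rmax J 1).
    assert (HJ' : 0 < J') by (pose proof (Rmax_r J 1); unfold J'; lra).
    destruct (Hlim (/ J' ^ 2)) as [K HK]; [apply Rinv_0_lt_compat; nra|].
    exists K. intros k Hk. specialize (HK k Hk). rewrite <- Ha2 in HK.
    assert (Hsmall : J' * a k <= 1).
    { apply Rnot_lt_le. intros Hbig. specialize (Ha k).
      assert (Hsq : 1 <= J' ^ 2 * a k ^ 2) by nra.
      assert (Hlt : J' ^ 2 * a k ^ 2 < J' ^ 2 * / J' ^ 2) by (apply Rmult_lt_compat_l; nra).
      rewrite Rinv_r in Hlt by nra. lra. }
    assert (HJJ' : J <= J') by apply Rmax_l.
    assert (J' <= / a k); [|lra].
    specialize (Ha k). apply (Rmult_le_reg_r (a k)); auto.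
    rewrite Rinv_l by lra. lra.
  - exists (2 * a 0%nat).
    assert (Htel : forall N, lsum (fun k => / a k * mu k) (seq 0 N) <= 2 * a 0%nat - 2 * a N).
    { induction N as [|N IH]; [simpl; lra|].
      rewrite seq_S, lsum_app. simpl.
      pose proof (sqrt_telescoping_step (a N) (a (S N)) (mu N) (Ha N) (Ha (S N)) (Hmu N)
                    ltac:(rewrite !Ha2; apply Hdiff)).
      lra. }
    intros N. specialize (Htel N). specialize (Ha N). lra.
Qed.

Lemma divergent_multiplier_on_measure {X} (e : nat -> X) (idx : X -> nat) (m : X -> R) :
  (forall x, e (idx x) = x) -> (forall n k, e n = e k -> n = k) ->
  is_measure m -> nn_summable m ->
  exists q : X -> R, (forall x, 0 <= q x) /\
    (forall J, exists F : list X, forall x, ~ In x F -> J <= q x) /\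
    nn_summable (fun x => q x * m x).
Proof.
  intros He Heinj Hm [A HA].
  assert (Hidx : forall x y, idx x = idx y -> x = y).
  { intros x y E. rewrite <- (He x), <- (He y), E. reflexivity. }
  destruct (divergent_multiplier (fun k => m (e k)) A) as [q [Hq0 [Hqinf [C HC]]]].
  - intros k; apply Hm.
  - intros N. rewrite <- (lsum_map m e). apply HA.
    apply Injective_map_NoDup; [exact Heinj|apply seq_NoDup].
  - exists (fun x => q (idx x)). split; [|split].
    + intros x; apply Hq0.
    + intros J. destruct (Hqinf J) as [K HK]. exists (map e (seq 0 K)).
      intros x Hx. apply HK. destruct (Compare_dec.le_lt_dec K (idx x)) as [Hle|Hlt]; auto.
      exfalso. apply Hx. rewrite <- (He x). apply in_map, in_seq. lia.
    + exists C.
      apply (nnsum_le_mono _ (fun x => q (idx x) * m (e (idx x)))); [intros x; rewrite He; lra|].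
      apply (nnsum_le_reindex idx (fun k => q k * m (e k))); auto.
      intros k. apply Rmult_le_pos; [apply Hq0|apply Hm].
Qed.

(** Walks and the weighted walk distance. *)

(* [l] continues a walk from [x] along edges of [b] ending at [y]; vertices
   may repeat. *)
Definition walk {X} (b : X -> X -> R) (x y : X) (l : list X) : Prop :=
  chain b (x :: l) /\ last (x :: l) x = y.

Fixpoint walk_length {X} (wt : X -> X -> R) (l : list X) : R :=
  match l with
  | x :: ((y :: _) as t) => wt x y + walk_length wt t
  | _ => 0
  end.

Lemma last_cons_default {X} (x d d' : X) l : last (x :: l) d = last (x :: l) d'.
Proof.
  revert x; induction l as [|y l IH]; intros x; [reflexivity|].
  exact (IH y).
Qed.

Lemma chain_snoc {X} (b : X -> X -> R) x l z d :
  chain b (x :: l) -> 0 < b (last (x :: l) d) z -> chain b (x :: l ++ [z]).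
Proof.
  revert x; induction l as [|y l IH]; intros x Hc Hz; simpl in *; [tauto|].
  split; [tauto|]. apply IH; tauto.
Qed.

Lemma walk_length_snoc {X} (wt : X -> X -> R) x l z d :
  walk_length wt (x :: l ++ [z]) = walk_length wt (x :: l) + wt (last (x :: l) d) z.
Proof.
  revert x; induction l as [|y l IH]; intros x; simpl; [lra|].
  specialize (IH y). simpl in IH. rewrite IH. lra.
Qed.

Lemma walk_snoc {X} (b : X -> X -> R) x y z l :
  walk b x y l -> 0 < b y z -> walk b x z (l ++ [z]).
Proof.
  intros [Hc Hend] Hyz. split.
  - apply (chain_snoc b x l z x); [exact Hc|rewrite Hend; exact Hyz].
  - rewrite app_comm_cons. apply last_last.
Qed.

Lemma connected_walk {X} (b : X -> X -> R) : connected b -> forall x y, exists l, walk b x y l.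
Proof.
  intros Hconn x y. destruct (classic_eq_dec x y) as [<-|Hxy].
  - exists []. split; [exact I|reflexivity].
  - destruct (Hconn x y Hxy) as [mid [_ Hc]]. exists (mid ++ [y]). split; [exact Hc|].
    rewrite app_comm_cons. apply last_last.
Qed.

Lemma walk_net {X} (s wt : X -> X -> R) (F : list X) (J : R) :
  0 <= J -> (forall x, s x x = 0) -> (forall x y z, s x z <= s x y + s y z) ->
  (forall x y, 0 <= wt x y) -> (forall x y, ~ In y F -> J * s x y <= wt x y) ->
  forall l x, exists u, (In u F \/ u = x) /\ J * s u (last (x :: l) x) <= walk_length wt (x :: l).
Proof.
  intros HJ Hs0 Htri Hwt Hlong. induction l as [|y l IH]; intros x.
  - exists x. split; [right; reflexivity|]. simpl. rewrite Hs0. lra.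
  - destruct (IH y) as [u [Hu Hle]].
    change (last (x :: y :: l) x) with (last (y :: l) x).
    rewrite (last_cons_default y x y).
    change (walk_length wt (x :: y :: l)) with (wt x y + walk_length wt (y :: l)).
    pose proof (Hwt x y).
    destruct Hu as [Hu| ->]; [exists u; split; [left; exact Hu|lra]|].
    destruct (excluded_middle_informative (In y F)) as [HyF|HyF].
    + exists y. split; [left; exact HyF|lra].
    + exists x. split; [right; reflexivity|].
      pose proof (Hlong x y HyF) as Hxy.
      pose proof (Rmult_le_compat_l J _ _ HJ (Htri x y (last (y :: l) y))). lra.
Qed.

Lemma glb_exists (S : R -> Prop) :
  (exists r, S r) -> (forall r, S r -> 0 <= r) ->
  exists c, (forall r, S r -> c <= r) /\
    (forall eps, 0 < eps -> exists r, S r /\ r < c + eps).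
Proof.
  intros [r0 Hr0] Hpos.
  destruct (completeness (fun r => S (- r))) as [L [Hub Hlub]].
  - exists 0. intros r Hr. specialize (Hpos _ Hr). lra.
  - exists (- r0). rewrite Ropp_involutive. exact Hr0.
  - exists (- L). split.
    + intros r Hr. assert (- r <= L); [|lra]. apply Hub. rewrite Ropp_involutive. exact Hr.
    + intros eps Heps. apply NNPP. intros Hno.
      assert (L <= L - eps); [|lra].
      apply Hlub. intros r Hr. apply Rnot_lt_le. intros Hlt. apply Hno.
      exists (- r). split; [exact Hr|lra].
Qed.

(* On a connected graph with nonnegative edge lengths [wt], the walk
   distance from [o] is 1-Lipschitz along edges: it is the infimum of the
   lengths of walks from [o]. *)
Lemma walk_distance_exists {X} (b wt : X -> X -> R) (o : X) :
  (forall x y, 0 <= wt x y) -> (forall z, exists l, walk b o z l) ->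
  exists f : X -> R, (forall z w, 0 < b z w -> f w <= f z + wt z w) /\
    (forall z eps, 0 < eps -> exists l, walk b o z l /\ walk_length wt (o :: l) < f z + eps).
Proof.
  intros Hwt Hwalk.
  assert (Hlen0 : forall l, 0 <= walk_length wt l).
  { induction l as [|x [|y l] IH]; simpl; try lra. specialize (Hwt x y). simpl in IH. lra. }
  assert (Hglb : forall z, exists c,
            (forall r, (exists l, walk b o z l /\ r = walk_length wt (o :: l)) -> c <= r) /\
            (forall eps, 0 < eps -> exists r,
               (exists l, walk b o z l /\ r = walk_length wt (o :: l)) /\ r < c + eps)).
  { intros z. apply glb_exists.
    - destruct (Hwalk z) as [l Hl]. eauto.
    - intros r [l [_ ->]]. apply Hlen0. }
  destruct (choice _ Hglb) as [f Hf].
  exists f. split.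
  - intros z w Hzw. apply Rnot_lt_le. intros Hlt.
    destruct (proj2 (Hf z) (f w - f z - wt z w)) as [r [[l [Hl ->]] Hr]]; [lra|].
    pose proof (walk_snoc b o z w l Hl Hzw) as Hl'.
    pose proof (proj1 (Hf w) _ (ex_intro _ _ (conj Hl' eq_refl))) as Hmin.
    rewrite (walk_length_snoc wt o l w o), (proj2 Hl) in Hmin. lra.
  - intros z eps Heps. destruct (proj2 (Hf z) eps Heps) as [r [[l [Hl ->]] Hr]].
    exists l. split; assumption.
Qed.

Definition stretched {X} (s : X -> X -> R) (q : X -> R) (x y : X) : R :=
  s x y * Rmax (sqrt (q x)) (sqrt (q y)).

Lemma stretched_nonneg {X} (s : X -> X -> R) (q : X -> R) x y :
  0 <= s x y -> 0 <= stretched s q x y.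
Proof.
  intros Hs. apply Rmult_le_pos; [exact Hs|].
  pose proof (Rmax_l (sqrt (q x)) (sqrt (q y))). pose proof (sqrt_pos (q x)). lra.
Qed.

Lemma stretched_sq_le {X} (s : X -> X -> R) (q : X -> R) x y :
  0 <= q x -> 0 <= q y -> stretched s q x y ^ 2 <= s x y ^ 2 * (q x + q y).
Proof.
  intros Hx Hy. unfold stretched. rewrite Rpow_mult_distr.
  apply Rmult_le_compat_l; [apply pow2_ge_0|].
  rewrite <- (pow2_sqrt (q x)) at 2 by exact Hx. rewrite <- (pow2_sqrt (q y)) at 2 by exact Hy.
  pose proof (pow2_ge_0 (sqrt (q x))). pose proof (pow2_ge_0 (sqrt (q y))).
  unfold Rmax; destruct Rle_dec; lra.
Qed.

Lemma finite_energy_of_increments {X} (b s : X -> X -> R) (m q f : X -> R) :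
  (forall x y, 0 <= b x y) -> (forall x y, b x y = b y x) -> (forall x y, s x y = s y x) ->
  (forall x, 0 <= q x) -> intrinsic b m s -> nn_summable (fun x => q x * m x) ->
  (forall x y, 0 < b x y -> (f x - f y) ^ 2 <= s x y ^ 2 * (q x + q y)) ->
  finite_energy b (fun z => (f z, 0)).
Proof.
  intros Hb0 Hbs Hss Hq0 Hint [C HC] Hinc.
  assert (Hrows : nnsum_le (fun p => q (fst p) * pair_energy b s p) C).
  { apply (nnsum_le_of_rows _ (fun x => q x * m x)); [|exact HC].
    intros x. exact (nnsum_le_scal _ (q x) (m x) (Hq0 x) (Hint x)). }
  exists (C + C).
  apply (nnsum_le_mono _ (fun p => q (fst p) * pair_energy b s p
                          + q (snd p) * pair_energy b s (snd p, fst p))).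
  - intros [x y]. change (pair_energy b (fun u v => Cmod (Csub (f u, 0) (f v, 0))) (x, y)
                          <= q x * pair_energy b s (x, y) + q y * pair_energy b s (y, x)).
    unfold pair_energy; cbn [fst snd]. rewrite (Hbs y x), (Hss y x), Cmod_sq.
    unfold Csub; cbn [fst snd]. replace (0 - 0) with 0 by ring.
    pose proof (Hq0 x). pose proof (Hq0 y). pose proof (pow2_ge_0 (s x y)).
    destruct (Rle_lt_or_eq_dec 0 (b x y) (Hb0 x y)) as [Hxy|Hxy]; [|rewrite <- Hxy; nra].
    assert (b x y * (f x - f y) ^ 2 <= b x y * (s x y ^ 2 * (q x + q y)))
      by (apply Rmult_le_compat_l; [lra|apply Hinc, Hxy]).
    nra.
  - apply nnsum_le_plus; [exact Hrows|]. exact (nnsum_le_swap _ _ Hrows).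
Qed.

(* Given a finite measure [m] and an intrinsic metric [s], stretch [s] by a
   weight [q] tending to infinity but keeping [sum q m] finite.  The
   stretched walk distance from a root has finite energy, hence is bounded;
   outside a finite set [F] the stretching is large, so every vertex is
   [s]-close to the last vertex of [F] on a short walk from the root. *)
Lemma totally_bounded_of_bounded_energy {X} (b : X -> X -> R) (e : nat -> X) (idx : X -> nat) :
  (forall x, e (idx x) = x) -> (forall n k, e n = e k -> n = k) ->
  weighted_graph b -> connected b ->
  (forall f : X -> Cpx, finite_energy b f -> bounded_fun f) ->
  forall (m : X -> R) (s : X -> X -> R),
    is_measure m -> nn_summable m -> is_metric s -> intrinsic b m s -> totally_bounded s.
Proof.
  intros He Heinj [Hb0 [Hbs _]] Hconn Hbd m s Hm Hms [Hs0 [Hseq [Hss Htri]]] Hint.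
  destruct (divergent_multiplier_on_measure e idx m He Heinj Hm Hms) as [q [Hq0 [Hqinf Hqm]]].
  set (wt := stretched s q).
  assert (Hwt0 : forall x y, 0 <= wt x y) by (intros x y; apply stretched_nonneg, Hs0).
  destruct (walk_distance_exists b wt (e 0%nat) Hwt0 (connected_walk b Hconn (e 0%nat)))
    as [f [Hflip Hfwalk]].
  assert (Hinc : forall x y, 0 < b x y -> (f x - f y) ^ 2 <= s x y ^ 2 * (q x + q y)).
  { intros x y Hxy. eapply Rle_trans; [|apply (stretched_sq_le s q x y (Hq0 x) (Hq0 y))].
    pose proof (Hflip x y Hxy). pose proof (Hflip y x ltac:(rewrite Hbs; exact Hxy)).
    assert (wt y x = wt x y) by (unfold wt, stretched; rewrite Hss, Rmax_comm; reflexivity).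
    pose proof (Hwt0 x y). rewrite <- (pow2_abs (f x - f y)).
    apply pow_incr. split; [apply Rabs_pos|]. apply Rabs_le. fold wt. lra. }
  destruct (Hbd _ (finite_energy_of_increments b s m q f Hb0 Hbs Hss Hq0 Hint Hqm Hinc)) as [M HM].
  intros eps Heps.
  set (J := (Rabs M + 2) / eps).
  assert (HJ : 0 < J) by (unfold J; apply Rdiv_lt_0_compat; [pose proof (Rabs_pos M)|]; lra).
  destruct (Hqinf (J ^ 2)) as [F HF].
  assert (Hlong : forall x y, ~ In y F -> J * s x y <= wt x y).
  { intros x y Hy. unfold wt, stretched. rewrite Rmult_comm. apply Rmult_le_compat_l; [apply Hs0|].
    assert (J <= sqrt (q y)).
    { rewrite <- (sqrt_pow2 J) by lra. apply sqrt_le_1; [apply pow2_ge_0|apply Hq0|apply HF, Hy]. }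
    pose proof (Rmax_r (sqrt (q x)) (sqrt (q y))). lra. }
  assert (Hs00 : forall x, s x x = 0) by (intros x; apply Hseq; reflexivity).
  exists (e 0%nat :: F). intros z.
  destruct (Hfwalk z 1 Rlt_0_1) as [l [[_ Hend] Hlen]].
  destruct (walk_net s wt F J ltac:(lra) Hs00 Htri Hwt0 Hlong l (e 0%nat)) as [u [Hu Hle]].
  exists u. split; [destruct Hu as [Hu| ->]; [right|left]; auto|].
  rewrite Hend in Hle. rewrite Hss.
  assert (Hfz : f z <= Rabs M).
  { specialize (HM z). rewrite Cmod_real in HM. pose proof (Rle_abs (f z)). pose proof (Rle_abs M). lra. }
  assert (HJeps : J * eps = Rabs M + 2) by (unfold J; field; lra).
  apply Rnot_le_lt. intros Hfar.
  pose proof (Rmult_le_compat_l J _ _ (Rlt_le _ _ HJ) Hfar). lra.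
Qed.

Theorem mainTheorem19 (X : Type) (HX : countably_infinite X)
  (b : X -> X -> R) (Hb : weighted_graph b) (Ht : is_tree b) :
  (forall (m : X -> R) (s : X -> X -> R),
      is_measure m -> nn_summable m -> is_metric s -> intrinsic b m s ->
      totally_bounded s)
  <->
  (forall f : X -> Cpx, finite_energy b f -> bounded_fun f).
Proof.
  destruct HX as [e [Heinj Hsurj]].
  destruct (choice _ Hsurj) as [idx He].
  assert (Hidx : forall x y, idx x = idx y -> x = y).
  { intros x y E. rewrite <- (He x), <- (He y), E. reflexivity. }
  split.
  - intros HTB f. apply bounded_of_finite_energy; [apply Hb|].
    exact (bounded_of_finite_energy_real b idx Hb Hidx HTB).
  - exact (totally_bounded_of_bounded_energy b e idx He Heinj Hb (proj1 Ht)).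
Qed.
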